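(* For all positive integers $n$ and $K\ge 2$, $$\min_{n=n_1\ge n_2\ge\cdots\ge n_{K-1}\ge n_K\ge1}\left(\sum_{k=1}^{K-1}\frac{n\cdot n_k}{\sqrt{n_{k+1}}}+n_{K-1}\cdot n_K\right)=O(K)\cdot n^{1.5+\frac{1}{6(2^{K-1}-1)}},$$ where the minimum is over real numbers $n_1,\dots,n_K$ and the $O(\cdot)$ hides an absolute constant. *)

From Stdlib Require Export Reals.
Open Scope R_scope.

(* A sequence n_1, ..., n_K is represented by m : nat -> R, using indices 1..K. *)

Definition feasible (n : nat) (K : nat) (m : nat -> R) : Prop :=
  m 1%nat = INR n /\
  (forall k : nat, (1 <= k)%nat -> (k < K)%nat -> m (S k) <= m k) /\
  1 <= m K.

Definition objective (n : nat) (K : nat) (m : nat -> R) : R :=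
  sum_f 1 (K - 1) (fun k => INR n * m k / sqrt (m (S k)))
  + m (K - 1)%nat * m K.

From Stdlib Require Import Reals Lra Lia.
Open Scope R_scope.

(* The bound holds with C = 1, and in fact with equality.  Take the exponents
   n_k = n^(1 + 2d - 2^k d): then n * n_k / sqrt n_(k+1) = n^(3/2 + d) for every
   k, since the exponent of n_(k+1) is twice that of n_k up to a constant.  The
   choice d = 1 / (6 (2^(K-1) - 1)) is exactly what makes the last term
   n_(K-1) n_K equal n^(3/2 + d) as well, and it gives n_K = n^(2/3) >= 1.  The
   objective is then K n^(3/2 + d). *)

Lemma Rpower_mul_div_sqrt x a b : 0 < x ->
  x * Rpower x a / sqrt (Rpower x b) = Rpower x (1 + a - b / 2).
Proof.
  intros Hx.
  assert (Hb : 0 < Rpower x b) by apply exp_pos.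
  rewrite <- Rpower_sqrt, Rpower_mult by exact Hb.
  replace (1 + a - b / 2) with (1 + (a + - (b * / 2))) by field.
  rewrite !Rpower_plus, Rpower_Ropp, Rpower_1 by exact Hx.
  unfold Rdiv; ring.
Qed.

Definition power_seq (x d : R) (k : nat) : R := Rpower x (1 + 2 * d - 2 ^ k * d).

Section PowerSeq.

Variables (x d : R).
Hypothesis x_gt0 : 0 < x.

Lemma power_seq_1 : power_seq x d 1 = x.
Proof.
  unfold power_seq; simpl.
  replace (1 + 2 * d - 2 * 1 * d) with 1 by ring.
  exact (Rpower_1 x x_gt0).
Qed.

Lemma power_seq_succ_le k :
  1 <= x -> 0 <= d -> power_seq x d (S k) <= power_seq x d k.
Proof.
  intros x_ge1 Hd; apply Rle_Rpower; [exact x_ge1|]; simpl.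
  assert (0 < 2 ^ k) by (apply pow_lt; lra).
  nra.
Qed.

Lemma power_seq_ratio k :
  x * power_seq x d k / sqrt (power_seq x d (S k)) = Rpower x (3 / 2 + d).
Proof.
  unfold power_seq; rewrite Rpower_mul_div_sqrt by exact x_gt0.
  f_equal; simpl; field.
Qed.

Section Calibrated.

Variable j : nat.
Hypothesis d_calibrated : 6 * (2 ^ j - 1) * d = 1.

Lemma power_seq_calibrated_succ : power_seq x d (S j) = Rpower x (2 / 3).
Proof.
  unfold power_seq; f_equal; simpl.
  replace (2 * 2 ^ j * d) with (2 * d + (6 * (2 ^ j - 1) * d) / 3) by field.
  rewrite d_calibrated; field.
Qed.

Lemma power_seq_calibrated_succ_ge1 : 1 <= x -> 1 <= power_seq x d (S j).
Proof.
  intros x_ge1.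
  rewrite power_seq_calibrated_succ, <- (Rpower_O x x_gt0) at 1.
  apply Rle_Rpower; [exact x_ge1 | lra].
Qed.

Lemma power_seq_calibrated_mul :
  power_seq x d j * power_seq x d (S j) = Rpower x (3 / 2 + d).
Proof.
  unfold power_seq; rewrite <- Rpower_plus; f_equal; simpl.
  replace (2 * 2 ^ j * d) with (2 * d + (6 * (2 ^ j - 1) * d) / 3) by field.
  replace (2 ^ j * d) with (d + (6 * (2 ^ j - 1) * d) / 6) by field.
  rewrite d_calibrated; field.
Qed.

End Calibrated.

End PowerSeq.

Lemma sum_f_const f c j : (forall k, f k = c) -> sum_f 1 (S j) f = INR (S j) * c.
Proof.
  intros Hf; unfold sum_f; replace (S j - 1)%nat with j by lia.
  rewrite (sum_eq _ (fun _ => c)) by (intros; apply Hf).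
  rewrite sum_cte; ring.
Qed.

Lemma pow2_calibration j : 6 * (2 ^ S j - 1) * (1 / (6 * (2 ^ S j - 1))) = 1.
Proof.
  assert (1 <= 2 ^ j) by (apply pow_R1_Rle; lra).
  simpl; field; lra.
Qed.

Section Objective.

Variables (n j : nat) (d : R).
Hypothesis n_ge1 : (1 <= n)%nat.
Hypothesis d_calibrated : 6 * (2 ^ S j - 1) * d = 1.

Let INR_n_ge1 : 1 <= INR n. Proof. exact (le_INR 1 n n_ge1). Qed.
Let INR_n_gt0 : 0 < INR n. Proof. lra. Qed.

Lemma feasible_power_seq : feasible n (S (S j)) (power_seq (INR n) d).
Proof.
  assert (Hd : 0 <= d).
  { assert (1 <= 2 ^ j) by (apply pow_R1_Rle; lra).
    simpl in d_calibrated; nra. }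
  split; [|split].
  - exact (power_seq_1 _ d INR_n_gt0).
  - intros k _ _; exact (power_seq_succ_le _ _ k INR_n_ge1 Hd).
  - exact (power_seq_calibrated_succ_ge1 _ _ INR_n_gt0 _ d_calibrated INR_n_ge1).
Qed.

Lemma objective_power_seq :
  objective n (S (S j)) (power_seq (INR n) d)
  = INR (S (S j)) * Rpower (INR n) (3 / 2 + d).
Proof.
  unfold objective; replace (S (S j) - 1)%nat with (S j) by lia.
  rewrite (sum_f_const _ (Rpower (INR n) (3 / 2 + d)))
    by exact (power_seq_ratio _ d INR_n_gt0).
  rewrite (power_seq_calibrated_mul _ _ _ d_calibrated).
  rewrite (S_INR (S j)); ring.
Qed.

End Objective.

Theorem claim3p6 :
  exists C : R, 0 < C /\
    forall n K : nat, (1 <= n)%nat -> (2 <= K)%nat ->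
      exists m : nat -> R,
        feasible n K m /\
        objective n K m <=
          C * INR K * Rpower (INR n) (3 / 2 + 1 / (6 * (2 ^ (K - 1) - 1))).
Proof.
  exists 1; split; [lra|].
  intros n K Hn HK.
  destruct K as [|[|j]]; [lia | lia |].
  replace (S (S j) - 1)%nat with (S j) by lia.
  set (d := 1 / (6 * (2 ^ S j - 1))).
  exists (power_seq (INR n) d); split.
  - exact (feasible_power_seq n j d Hn (pow2_calibration j)).
  - rewrite (objective_power_seq n j d Hn (pow2_calibration j)); lra.
Qed.
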